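(* Let $C_n(a,b)$ be a connected $2$-regular circulant digraph (so $\gcd(n,a,b)=1$). Let $l\ge 1$ and $0\le k\le l$ be integers, and suppose $la+k(b-a)=\omega n$ for some integer $\omega$. Then the number of primitive periodic orbits of $C_n(a,b)$ of length $l$ with $b$-count $k$ is $$|\mathcal{P}_{l,k}(C_n(a,b))|=\frac{n}{l}\sum_{m\mid \gcd(l,k,\omega)}\mu(m)\binom{l/m}{k/m},$$ where $\mu$ is the Möbius function.
   Context: Let $n\ge 2$ and $0<a<b<n$ be integers. The directed circulant graph $C_n(a,b)$ has vertex set $\mathbb{Z}_n$ and directed bonds $(v,v+a)$ and $(v,v+b)$ for each $v\in\mathbb{Z}_n$ (addition mod $n$); the bond $(v,v+s)$ has step size $s\in\{a,b\}$. It is (strongly) connected iff $\gcd(n,a,b)=1$. A path of length $l$ is a sequence of bonds $(e_1,\dots,e_l)$ where the terminus of $e_j$ is the origin of $e_{j+1}$; its $b$-count is the number of bonds of step size $b$ in it; its step sequence is the sequence of step sizes. A circuit is a path whose last terminus equals its first origin; a path of length $l$ and $b$-count $k$ is a circuit iff $n$ divides its transit distance $(l-k)a+kb$, and the winding number is the transit distance divided by $n$. A periodic orbit is an equivalence class of circuits under cyclic rotation $\sigma(e_1,\dots,e_l)=(e_2,\dots,e_l,e_1)$; length, $b$-count and winding number are well defined on orbits. For a circuit $c$, $c^r$ denotes the concatenation of $r$ copies of $c$. A periodic orbit $p$ is primitive if there is no circuit $c_0$ and integer $r>1$ with $p=[c_0^r]$. $\mathcal{P}_{l,k}(C_n(a,b))$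 denotes the set of primitive periodic orbits of length $l$ and $b$-count $k$. *)

From Stdlib Require Import ClassicalEpsilon.
From mathcomp Require Import all_boot all_order all_algebra.
Set Implicit Arguments. Unset Strict Implicit. Unset Printing Implicit Defensive.
Import GRing.Theory Num.Theory.

Definition pb (P : Prop) : bool :=
  if excluded_middle_informative P then true else false.

Section Circulant.
Variables (n a b : nat).

(* A bond is (v, v+s); it is determined by its origin v : 'Z_n and its step
   size s in {a,b}; we encode the step size by a boolean (true = b). A path is
   determined by its first origin and its step sequence. *)
Definition stepsz (x : bool) : nat := if x then b else a.

Definition transit (w : seq bool) : nat := sumn (map stepsz w).

Definition terminus (v : 'Z_n) (w : seq bool) : 'Z_n := (v + (transit w)%:R)%R.

Definition is_circuit (c : 'Z_n * seq bool) : Prop := terminus c.1 c.2 = c.1.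

Definition rotc (c : 'Z_n * seq bool) : 'Z_n * seq bool :=
  match c.2 with
  | [::] => c
  | x :: w => ((c.1 + (stepsz x)%:R)%R, rcons w x)
  end.

Definition in_orbit (d c : 'Z_n * seq bool) : Prop :=
  exists i : nat, iter i rotc c = d.

Definition cpow (c : 'Z_n * seq bool) (r : nat) : 'Z_n * seq bool :=
  (c.1, flatten (nseq r c.2)).

Definition primitive_orbit_of (c : 'Z_n * seq bool) : Prop :=
  ~ exists (c0 : 'Z_n * seq bool) (r : nat),
      1 < r /\ is_circuit c0 /\ in_orbit (cpow c0 r) c.

Variable l : nat.

Definition tseq (c : 'Z_n * l.-tuple bool) : 'Z_n * seq bool := (c.1, val c.2).

Definition orbit_set (c : 'Z_n * l.-tuple bool) : {set 'Z_n * l.-tuple bool} :=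
  [set d | pb (in_orbit (tseq d) (tseq c))].

Definition prim_orbits (k : nat) : {set {set 'Z_n * l.-tuple bool}} :=
  [set orbit_set c | c in [set c : 'Z_n * l.-tuple bool |
       pb (is_circuit (tseq c) /\ count id c.2 = k /\ primitive_orbit_of (tseq c))]].

End Circulant.

Definition moebius (m : nat) : int :=
  if m == 0 then 0%R
  else if all (fun p => logn p m == 1) (primes m) then ((-1) ^+ size (primes m))%R
  else 0%R.

From Stdlib Require Import ClassicalEpsilon.
From mathcomp Require Import all_boot all_order all_algebra.
From mathcomp Require Import zify ring.
Set Implicit Arguments. Unset Strict Implicit. Unset Printing Implicit Defensive.
Import GRing.Theory Num.Theory.

(* Let R act on pairs (origin, step word of length l) by moving the origin one
   step and rotating the word; R is injective on a finite set. Circuits are the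
   points with R^l c = c, periodic orbits are R-orbits, and a circuit is
   primitive iff its R-orbit has exactly l elements. Hence l |P_{l,k}| counts
   circuits with b-count k of exact period l, and Moebius inversion over the
   divisors m of l expresses it through the numbers of circuits fixed by R^(l/m).
   Such a circuit is the m-th power of a word u of length l/m and b-count k/m,
   with any of the n origins; it closes up iff n divides the transit distance of
   u, which is omega n / m, i.e. iff m | omega. This gives n 'C(l/m, k/m) when m
   divides both k and omega, and 0 otherwise. *)

Section Repetition.
Variable T : Type.
Implicit Types (u w x y : seq T) (r : nat).

Lemma size_flatten_nseq u r : size (flatten (nseq r u)) = r * size u.
Proof. by elim: r => //= r IH; rewrite size_cat IH mulSn. Qed.

Lemma count_flatten_nseq (P : pred T) u r :
  count P (flatten (nseq r u)) = r * count P u.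
Proof. by elim: r => //= r IH; rewrite count_cat IH mulSn. Qed.

Lemma rot_size_flatten_nseq u r :
  rot (size u) (flatten (nseq r u)) = flatten (nseq r u).
Proof.
case: r => [|r] /=; first by rewrite rot_oversize.
rewrite rot_size_cat; elim: r => [|r IH] /=; first by rewrite cats0.
by rewrite -catA IH.
Qed.

Lemma take_size_flatten_nseq u r : 0 < r ->
  take (size u) (flatten (nseq r u)) = u.
Proof. by case: r => // r _ /=; rewrite take_size_cat. Qed.

Lemma commute_cat_flatten_nseq x y r :
  x ++ y = y ++ x -> size x = r * size y -> x = flatten (nseq r y).
Proof.
elim: r x => [|r IH] x xyC sz_x /=.
  by move: sz_x {xyC}; rewrite mul0n; case: x.
have take_x : take (size y) x = y.
  have := congr1 (take (size y)) xyC.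
  by rewrite [take _ (y ++ x)]take_size_cat // takel_cat // sz_x mulSn leq_addr.
have x_cat : x = y ++ drop (size y) x by rewrite -{1}(cat_take_drop (size y) x) take_x.
rewrite x_cat; congr (_ ++ _); apply: IH.
  move: xyC; rewrite x_cat -!catA => /(congr1 (drop (size y))).
  by rewrite !drop_size_cat.
by rewrite size_drop sz_x mulSn addKn.
Qed.

Lemma rot_id_flatten_nseq w p : 0 < p -> p %| size w -> rot p w = w ->
  w = flatten (nseq (size w %/ p) (take p w)).
Proof.
move=> p_gt0 /dvdnP[q sz_w] rot_w.
have [q0|q_gt0] := posnP q.
  by move: sz_w {rot_w}; rewrite q0 mul0n; case: w => // _; rewrite div0n.
have sz_take : size (take p w) = p by rewrite size_takel // sz_w leq_pmull.
have wC : drop p w ++ take p w = take p w ++ drop p w by rewrite cat_take_drop.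
rewrite sz_w mulnK // -{1}(cat_take_drop p w).
rewrite (commute_cat_flatten_nseq (r := q.-1) wC); last first.
  by rewrite size_drop sz_take sz_w -{1}(prednK q_gt0) mulSn addKn.
by rewrite -[in RHS](prednK q_gt0).
Qed.

End Repetition.

Section InjectiveOrder.
Variables (T : finType) (f : T -> T).
Hypothesis f_inj : injective f.

Lemma iter_inj i : injective (iter i f).
Proof. by elim: i => // i IH x y /= /f_inj /IH. Qed.

Lemma iter_mul_order x q : iter (q * order f x) f x = x.
Proof. by elim: q => // q IH; rewrite mulSn iterD IH iter_order. Qed.

Lemma order_dvdn_iter x i : (order f x %| i) = (iter i f x == x).
Proof.
have o_gt0 := order_gt0 f x.
apply/idP/eqP => [/dvdnP[q ->]|fix_x]; first exact: iter_mul_order.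
have fix_mod : iter (i %% order f x) f x = x.
  by move: fix_x; rewrite {1}(divn_eq i (order f x)) addnC iterD iter_mul_order.
have := findex_iter (ltn_pmod i o_gt0); rewrite fix_mod.
by rewrite /findex /orbit -orderSpred /= eqxx /dvdn => <-.
Qed.

Lemma iter_fix_iter x i j : iter i f (iter j f x) = iter j f x <-> iter i f x = x.
Proof. by rewrite -iterD addnC iterD; split=> [/iter_inj|->]. Qed.

Lemma fconnect_iterP x y : reflect (exists i, iter i f x = y) (fconnect f x y).
Proof.
apply: (iffP idP) => [xy|[i <-]]; last exact: fconnect_iter.
by exists (findex f x y); apply: iter_findex.
Qed.

Lemma order_iter x j : order f (iter j f x) = order f x.
Proof.
apply/eqP; rewrite eqn_dvd !order_dvdn_iter.
apply/andP; split; apply/eqP.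
  exact: (iter_fix_iter x _ j).2 (iter_order f_inj x).
by apply/(iter_fix_iter x _ j); rewrite iter_order.
Qed.

End InjectiveOrder.

Section BigDivisors.
Variables (R : Type) (idx : R) (op : Monoid.com_law idx).

Lemma big_divisors_filter N N' (P Q : pred nat) (F : nat -> R) : 0 < N -> 0 < N' ->
  (forall m, (m %| N) && P m = (m %| N') && Q m) ->
  \big[op/idx]_(m <- divisors N | P m) F m = \big[op/idx]_(m <- divisors N' | Q m) F m.
Proof.
move=> N_gt0 N'_gt0 PQ; rewrite -big_filter -[RHS]big_filter; apply: perm_big.
apply: uniq_perm; rewrite ?filter_uniq ?divisors_uniq // => m.
by rewrite !mem_filter -!dvdn_divisors // andbC PQ andbC.
Qed.

Lemma big_divisors_mul_dvd p M (F : nat -> R) : 0 < p -> 0 < M ->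
  \big[op/idx]_(m <- divisors (p * M) | p %| m) F m
  = \big[op/idx]_(d <- divisors M) F (p * d).
Proof.
move=> p_gt0 M_gt0; have pM_gt0 : 0 < p * M by rewrite muln_gt0 p_gt0.
rewrite -big_filter -(big_map (muln p) xpredT); apply: perm_big; apply: uniq_perm.
- by rewrite filter_uniq ?divisors_uniq.
- by rewrite map_inj_uniq ?divisors_uniq // => x y /eqP; rewrite eqn_pmul2l // => /eqP.
move=> x; rewrite mem_filter -dvdn_divisors //; apply/andP/mapP => [[]|[d]].
  case/dvdnP=> d ->; rewrite mulnC dvdn_pmul2l // => dM.
  by exists d; rewrite -?dvdn_divisors // mulnC.
by rewrite -dvdn_divisors // => dM ->; rewrite dvdn_mulr // dvdn_pmul2l.
Qed.

End BigDivisors.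

Lemma primes_primeM p d : prime p -> 0 < d -> ~~ (p %| d) ->
  perm_eq (primes (p * d)) (p :: primes d).
Proof.
move=> p_pr d_gt0 pNd; apply: uniq_perm; rewrite /= ?primes_uniq ?andbT //.
  by rewrite mem_primes (negPf pNd) !andbF.
by move=> q; rewrite primesM ?(prime_gt0 p_pr) // primes_prime // !inE.
Qed.

Lemma moebius_primeM p d : prime p -> 0 < d -> ~~ (p %| d) ->
  moebius (p * d) = (- moebius d)%R.
Proof.
move=> p_pr d_gt0 pNd; have p_gt0 := prime_gt0 p_pr.
have lognp : logn p (p * d) = 1.
  rewrite lognM // logn_prime // eqxx; apply/eqP; rewrite eqSS -leqn0 leqNgt.
  by rewrite logn_gt0 mem_primes p_pr d_gt0 (negPf pNd).
have lognq q : q \in primes d -> logn q (p * d) = logn q d.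
  rewrite mem_primes => /and3P[q_pr _ qd]; rewrite lognM // logn_prime //.
  by case: eqP => [qp|//]; move: pNd; rewrite -qp qd.
have pd_primes := primes_primeM p_pr d_gt0 pNd.
rewrite /moebius muln_eq0 !eqn0Ngt p_gt0 d_gt0 /= (perm_all _ pd_primes).
rewrite (perm_size pd_primes) /= lognp eqxx /=.
rewrite (eq_in_all (a2 := fun q => logn q d == 1)) => [|q /lognq -> //].
by case: ifP; rewrite ?oppr0 // exprS mulN1r.
Qed.

Lemma moebius_primeXM p d : prime p -> 0 < d -> moebius (p * (p * d)) = 0%R.
Proof.
move=> p_pr d_gt0; have p_gt0 := prime_gt0 p_pr.
rewrite /moebius; case: ifP => // _; case: ifP => // /allP /(_ p).
rewrite mem_primes p_pr !muln_gt0 p_gt0 d_gt0 dvdn_mulr //.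
by rewrite !lognM ?muln_gt0 ?p_gt0 // logn_prime // eqxx => /(_ isT).
Qed.

Section MoebiusSum.
Local Open Scope ring_scope.

Lemma sum_moebius_divisors N : (0 < N)%N ->
  \sum_(m <- divisors N) moebius m = (N == 1%N)%:R :> int.
Proof.
move=> N_gt0; have [N_le1|N_gt1] := leqP N 1.
  have -> : N = 1%N by apply/eqP; rewrite eqn_leq N_le1.
  by rewrite big_seq1.
have [p p_pr [M M_gt0 NE]] : exists2 p, prime p & exists2 M, (0 < M)%N & N = (p * M)%N.
  exists (pdiv N); first exact: pdiv_prime.
  exists (N %/ pdiv N)%N; last by rewrite mulnC divnK ?pdiv_dvd.
  by rewrite divn_gt0 ?pdiv_gt0 // dvdn_leq // pdiv_dvd.
have p_gt0 := prime_gt0 p_pr.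
have divisor_gt0 d : d \in divisors M -> (0 < d)%N.
  by rewrite -dvdn_divisors // => /dvdn_gt0; apply.
have sum_pNdvd : \sum_(m <- divisors N | ~~ (p %| m)%N) moebius m
               = \sum_(d <- divisors M | ~~ (p %| d)%N) moebius d.
  apply: big_divisors_filter => // m; case: (boolP (p %| m)%N) => pm; rewrite ?andbF //.
  by rewrite !andbT NE Gauss_dvdr // coprime_sym prime_coprime.
rewrite (bigID (dvdn p)) /= sum_pNdvd NE big_divisors_mul_dvd // (bigID (dvdn p)) /=.
rewrite big1_seq => [|d /andP[/dvdnP[e ->] /divisor_gt0]]; last first.
  by rewrite muln_gt0 (mulnC e) => /andP[e_gt0 _]; apply: moebius_primeXM.
rewrite add0r -NE gtn_eqF // big_seq_cond [X in _ + X]big_seq_cond -big_split big1 //.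
by move=> d /andP[/divisor_gt0 d_gt0 pNd]; rewrite moebius_primeM //; apply: addNr.
Qed.

Lemma sum_moebius_dvd_div l o : (0 < l)%N -> (o %| l)%N -> (0 < o)%N ->
  \sum_(m <- divisors l | (o %| l %/ m)%N) moebius m = (o == l)%:R :> int.
Proof.
move=> l_gt0 ol o_gt0; have lo_gt0 : (0 < l %/ o)%N by rewrite divn_gt0 // dvdn_leq.
rewrite (big_divisors_filter _ _ (N' := l %/ o) (Q := predT)) //.
  by rewrite sum_moebius_divisors // -(eqn_pmul2r o_gt0) divnK // mul1n eq_sym.
move=> m; rewrite andbT; have [ml|mNl] /= := boolP (m %| l)%N.
  by rewrite !dvdn_divRL // mulnC.
by apply/esym/negbTE; apply: contra mNl => /dvdn_trans; apply; apply: dvdn_div.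
Qed.

End MoebiusSum.

Lemma card_tuples_count p j :
  #|[set u : p.-tuple bool | count id u == j]| = 'C(p, j).
Proof.
pose indicator (A : {set 'I_p}) : p.-tuple bool := map_tuple (fun i => i \in A) (ord_tuple p).
have indicator_inj : injective indicator.
  move=> A B /(congr1 (@tnth _ _)) AB; apply/setP => i.
  by have := congr1 (fun t => t i) AB; rewrite !tnth_map !tnth_ord_tuple.
have count_indicator A : count id (indicator A) = #|A|.
  by rewrite count_map cardE /enum_mem size_filter val_ord_tuple enumT.
have -> : [set u : p.-tuple bool | count id u == j]
        = indicator @: [set A : {set 'I_p} | #|A| == j].
  apply/setP => u; rewrite inE; apply/idP/imsetP => [|[A]]; last first.
    by rewrite inE => /eqP <- ->; rewrite count_indicator.
  have uE : u = indicator [set i | tnth u i].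
    by apply: eq_from_tnth => i; rewrite tnth_map tnth_ord_tuple inE.
  by rewrite {1}uE count_indicator => uj; exists [set i | tnth u i]; rewrite ?inE.
by rewrite card_imset // card_draws card_ord.
Qed.

Lemma card_rot_id_tuples (T : finType) l m p (P : pred (seq T)) :
  0 < m -> 0 < p -> l = m * p ->
  #|[set w : l.-tuple T | (rot p w == w) && P (take p w)]| = #|[set u : p.-tuple T | P u]|.
Proof.
move=> m_gt0 p_gt0 ->.
have rep_size (u : p.-tuple T) : size (flatten (nseq m (val u))) == m * p.
  by rewrite size_flatten_nseq size_tuple.
pose rep u := Tuple (rep_size u).
have take_rep u : take p (rep u) = u.
  by rewrite /= -{1}(size_tuple u) take_size_flatten_nseq.
have rep_inj : injective rep.
  by move=> u1 u2 /(congr1 (take p \o val)) /=; rewrite !take_rep => /val_inj.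
suff -> : [set w : (m * p).-tuple T | (rot p w == w) && P (take p w)]
        = rep @: [set u : p.-tuple T | P u].
  exact: card_imset.
apply/setP => w; rewrite inE.
apply/andP/imsetP => [[/eqP rot_w Pw]|[u + ->]]; last first.
  rewrite inE take_rep => Pu; split=> //; apply/eqP.
  by rewrite /= -{1}(size_tuple u) rot_size_flatten_nseq.
have sz_take : size (take p w) == p by rewrite size_takel // size_tuple leq_pmull.
exists (Tuple sz_take); rewrite ?inE //; apply: val_inj => /=.
by rewrite {1}(rot_id_flatten_nseq p_gt0 _ rot_w) size_tuple ?mulnK // dvdn_mull.
Qed.

Lemma dvdn_mul_transfer n m x w : 0 < n -> 0 < m -> m * x = w * n ->
  (n %| x) = (m %| w).
Proof.
move=> n_gt0 m_gt0 mx_wn.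
by rewrite -(dvdn_pmul2r m_gt0) [x * m]mulnC mx_wn [n * m]mulnC dvdn_pmul2r.
Qed.

Lemma card_set_sum (T : finType) (R : pzSemiRingType) (A : {set T}) (P : pred T) :
  (#|[set x in A | P x]|%:R = \sum_(x in A) (P x)%:R :> R)%R.
Proof.
rewrite -sum1_card natr_sum big_mkcond [RHS]big_mkcond; apply: eq_bigr => x _.
by rewrite !inE; case: (x \in A); case: (P x).
Qed.

Section Transit.
Variables a b : nat.

Lemma transit_cat s1 s2 : transit a b (s1 ++ s2) = transit a b s1 + transit a b s2.
Proof. by rewrite /transit map_cat sumn_cat. Qed.

Lemma transit_flatten_nseq u r : transit a b (flatten (nseq r u)) = r * transit a b u.
Proof. by elim: r => //= r IH; rewrite transit_cat IH mulSn. Qed.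

Lemma transit_count s :
  transit a b s = count id s * b + (size s - count id s) * a.
Proof.
elim: s => //= x s IH; rewrite /transit /= -/(transit a b s) IH.
have := count_size id s; case: x => /=; nia.
Qed.

End Transit.

Section Circuits.
Variables (n a b : nat).
Hypothesis n_gt1 : 1 < n.

Lemma Zp_add_natr_id (v : 'Z_n) x : (v + x%:R = v)%R <-> n %| x.
Proof.
split=> [|/dvdnP[q ->]]; last by rewrite natrM pchar_Zp // mulr0 addr0.
rewrite -{2}[v]addr0 => /addrI /(congr1 val) /= x0.
by rewrite /dvdn -(val_Zp_nat n_gt1) x0.
Qed.

Lemma is_circuitE (c : 'Z_n * seq bool) : is_circuit a b c <-> n %| transit a b c.2.
Proof. exact: Zp_add_natr_id. Qed.

Lemma iter_rotc (v : 'Z_n) s p : p <= size s ->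
  iter p (rotc a b) (v, s) = ((v + (transit a b (take p s))%:R)%R, rot p s).
Proof.
elim: p => [|p IH] ps; first by rewrite take0 rot0 addr0.
rewrite iterS IH 1?ltnW // /rotc /= /rot (drop_nth false ps) /= (take_nth false ps).
by rewrite rcons_cat -cats1 transit_cat natrD addrA /transit /= addn0.
Qed.

Variable l : nat.
Hypothesis l_gt0 : 0 < l.
Local Notation lpath := ('Z_n * l.-tuple bool)%type.

Definition rotc_tuple (c : lpath) : lpath :=
  ((c.1 + (stepsz a b (head false c.2))%:R)%R, rot_tuple 1 c.2).
Local Notation R := rotc_tuple.

Lemma tseq_rotc_tuple c : tseq (R c) = rotc a b (tseq c).
Proof.
case: c => v [[|x w] sz_w]; first by exfalso; move: l_gt0; rewrite -(eqP sz_w).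
by rewrite /R /tseq /rotc /= rot1_cons.
Qed.

Lemma tseq_iter i c : tseq (iter i R c) = iter i (rotc a b) (tseq c).
Proof. by elim: i => //= i IH; rewrite tseq_rotc_tuple IH. Qed.

Lemma tseq_inj : injective (@tseq n l).
Proof. by case=> v w [v' w'] [-> /val_inj ->]. Qed.

Lemma rotc_tuple_inj : injective R.
Proof.
case=> v w [v' w'] cc'.
have ww' : w = w' by apply/val_inj/(@rot_inj 1)/(congr1 (val \o snd) cc').
by move: cc'; rewrite ww' => /(congr1 fst) /= /addIr ->.
Qed.

Lemma iter_rotc_tuple_id c p : p <= l ->
  iter p R c = c <-> rot p c.2 = c.2 /\ n %| transit a b (take p c.2).
Proof.
move=> pl; split=> [/(congr1 (@tseq n l))|[rot_c transit_c]].
  by rewrite tseq_iter /tseq iter_rotc ?size_tuple // => -[/Zp_add_natr_id].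
apply: tseq_inj; rewrite tseq_iter /tseq iter_rotc ?size_tuple // rot_c.
by congr (_, _); apply/Zp_add_natr_id.
Qed.

Lemma circuit_iter_l_id c : is_circuit a b (tseq c) <-> iter l R c = c.
Proof.
rewrite is_circuitE iter_rotc_tuple_id // take_oversize ?rot_oversize ?size_tuple //.
by split=> [|[]].
Qed.

Lemma circuit_iter c i : is_circuit a b (tseq (iter i R c)) <-> is_circuit a b (tseq c).
Proof. rewrite !circuit_iter_l_id; exact: iter_fix_iter rotc_tuple_inj c l i. Qed.

Lemma order_dvd_l c : is_circuit a b (tseq c) -> order R c %| l.
Proof. by rewrite circuit_iter_l_id order_dvdn_iter => [/eqP|]//; apply: rotc_tuple_inj. Qed.

Lemma count_iter c i : count id (iter i R c).2 = count id c.2.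
Proof. by elim: i => //= i <-; rewrite /rot count_cat addnC -count_cat cat_take_drop. Qed.

Lemma order_dvd_cpow c c0 r : 0 < r -> is_circuit a b c0 ->
  tseq c = cpow c0 r -> order R c %| size c0.2.
Proof.
move=> r_gt0 c0_circ [_ c2E].
have sz_l : l = r * size c0.2 by rewrite -size_flatten_nseq -c2E size_tuple.
rewrite order_dvdn_iter; last exact: rotc_tuple_inj.
apply/eqP/iter_rotc_tuple_id; first by rewrite sz_l leq_pmull.
rewrite c2E rot_size_flatten_nseq take_size_flatten_nseq //.
by split=> //; apply/is_circuitE.
Qed.

Lemma primitiveE c : is_circuit a b (tseq c) ->
  primitive_orbit_of a b (tseq c) <-> order R c = l.
Proof.
move=> c_circ; have o_l := order_dvd_l c_circ; have o_gt0 := order_gt0 R c.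
set o := order R c in o_l o_gt0 *.
split=> [c_prim|o_eq_l [c0 [r [r_gt1 [c0_circ [i c_cpow]]]]]].
  have [//|o_ne_l] := eqVneq o l; case: c_prim.
  have o_lt_l : o < l by rewrite ltn_neqAle o_ne_l dvdn_leq.
  have /iter_rotc_tuple_id[] := iter_order rotc_tuple_inj c.
    exact: ltnW.
  move=> rot_c transit_c.
  exists (c.1, take o c.2), (l %/ o); split; [|split].
  - by rewrite ltn_divRL // mul1n.
  - exact/is_circuitE.
  exists 0; rewrite /cpow /tseq /=; congr (_, _).
  by rewrite {1}(rot_id_flatten_nseq o_gt0 _ rot_c) size_tuple.
have c_cpow' : tseq (iter i R c) = cpow c0 r by rewrite tseq_iter.
have sz_l : l = r * size c0.2.
  by rewrite -size_flatten_nseq -[flatten _]/((cpow c0 r).2) -c_cpow' size_tuple.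
have c0_gt0 : 0 < size c0.2 by move: l_gt0; rewrite sz_l muln_gt0 => /andP[].
have := order_dvd_cpow (ltnW r_gt1) c0_circ c_cpow'.
rewrite (order_iter rotc_tuple_inj) -/o o_eq_l => /(dvdn_leq c0_gt0).
by rewrite sz_l -{2}[size c0.2]mul1n leq_pmul2r // leqNgt r_gt1.
Qed.

End Circuits.

Lemma pbP (P : Prop) : reflect P (pb P).
Proof. by rewrite /pb; case: excluded_middle_informative => H; constructor. Qed.

Section Counting.
Variables (n a b l k w : nat).
Hypotheses (n_gt1 : 1 < n) (l_gt0 : 0 < l) (k_le_l : k <= l).
Hypothesis transit_eq : k * b + (l - k) * a = w * n.

Local Notation lpath := ('Z_n * l.-tuple bool)%type.
Local Notation R := (@rotc_tuple n a b l).

Definition bcount_circuits : {set lpath} :=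
  [set c | pb (is_circuit a b (tseq c)) && (count id c.2 == k)].

Definition prim_circuits : {set lpath} :=
  [set c : lpath | pb (is_circuit a b (tseq c) /\ count id c.2 = k /\
                      primitive_orbit_of a b (tseq c))].

Lemma prim_circuitsE : prim_circuits = [set c in bcount_circuits | order R c == l].
Proof.
apply/setP => c; rewrite !inE; apply/pbP/andP => [[c_circ [ck c_prim]]|].
  have /(primitiveE n_gt1 l_gt0 c_circ) o_c := c_prim.
  by rewrite ck o_c !eqxx andbT; split=> //; apply/pbP.
case=> /andP[/pbP c_circ /eqP ck] /eqP o_c.
by split; [|split] => //; apply/(primitiveE n_gt1 l_gt0 c_circ).
Qed.

Lemma orbit_setE c : orbit_set a b c = [set d | fconnect R c d].
Proof.
apply/setP => d; rewrite !inE; apply/pbP/(fconnect_iterP R c d) => -[i cd]; exists i.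
  by apply: tseq_inj; rewrite (tseq_iter a b l_gt0).
by rewrite -cd (tseq_iter a b l_gt0).
Qed.

Lemma prim_circuits_closed c d : c \in prim_circuits -> fconnect R c d -> d \in prim_circuits.
Proof.
rewrite prim_circuitsE !inE => /andP[/andP[/pbP c_circ /eqP ck] /eqP o_c].
case/(fconnect_iterP R c d) => i <-.
rewrite (count_iter a b) ck (order_iter (@rotc_tuple_inj n a b l)) o_c !eqxx !andbT.
by apply/pbP/(circuit_iter a b n_gt1 l_gt0).
Qed.

Lemma card_prim_orbits : #|prim_orbits n a b l k| * l = #|prim_circuits|.
Proof.
have R_inj := @rotc_tuple_inj n a b l.
have conn_equiv : {in prim_circuits & &, equivalence_rel (fconnect R)}.
  move=> x y z _ _ _; split=> [|xy]; first exact: connect0.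
  apply/idP/idP => [|yz]; last exact: connect_trans yz.
  by apply: connect_trans; rewrite fconnect_sym.
have orbitsE : prim_orbits n a b l k = equivalence_partition (fconnect R) prim_circuits.
  apply: eq_in_imset => c c_prim; rewrite orbit_setE; apply/setP => d; rewrite !inE.
  apply/idP/andP => [cd|[]//]; split=> //.
  by have := prim_circuits_closed c_prim cd; rewrite inE.
rewrite (card_partition (equivalence_partitionP conn_equiv)) -orbitsE -sum_nat_const.
apply: eq_bigr => _ /imsetP[c c_prim ->]; rewrite orbit_setE cardsE.
have : c \in prim_circuits := c_prim.
by rewrite prim_circuitsE inE => /andP[_ /eqP].
Qed.

Lemma card_tuples_count_transit m p : 0 < m -> l = m * p ->
  #|[set u : p.-tuple bool | (m * count id u == k) && (n %| transit a b u)]|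
  = if (m %| k) && (m %| w) then 'C(p, k %/ m) else 0.
Proof.
move=> m_gt0 lE; have n_gt0 : 0 < n by apply: ltnW.
have [/dvdnP[k' kE]|mNk] /= := boolP (m %| k); last first.
  apply: eq_card0 => u; rewrite inE; apply/negbTE; apply: contraNN mNk.
  by case/andP=> /eqP <- _; apply: dvdn_mulr.
have k'_le_p : k' <= p by move: k_le_l; rewrite kE lE mulnC leq_pmul2l.
(* with b-count k/m, m times the transit distance of u is w n *)
have uE : [set u : p.-tuple bool | (m * count id u == k) && (n %| transit a b u)]
          = [set u : p.-tuple bool | (count id u == k') && (m %| w)].
  apply/setP => u; rewrite !inE kE (mulnC k') eqn_pmul2l //; case: eqP => //= uk'.
  apply: dvdn_mul_transfer => //.
  by rewrite transit_count size_tuple uk' -transit_eq kE lE; nia.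
rewrite uE kE mulnK //; case: (m %| w); last by apply: eq_card0 => u; rewrite inE andbF.
by rewrite -card_tuples_count; apply: eq_card => u; rewrite !inE andbT.
Qed.

Lemma card_fixed_circuits m : m %| l ->
  #|[set c in bcount_circuits | iter (l %/ m) R c == c]|
  = if (m %| k) && (m %| w) then n * 'C(l %/ m, k %/ m) else 0.
Proof.
move=> m_l; set p := l %/ m; have lE : l = m * p by rewrite mulnC divnK.
have [m_gt0 p_gt0] : 0 < m /\ 0 < p by apply/andP; rewrite -muln_gt0 -lE.
have p_le_l : p <= l by rewrite lE leq_pmull.
(* a path fixed by R^p is the m-th power of its first p steps, from any origin *)
have rep_w (x : l.-tuple bool) : rot p x = x -> val x = flatten (nseq m (take p x)).
  have p_dvd : p %| size x by rewrite size_tuple lE dvdn_mull.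
  have l_div_p : l %/ p = m by rewrite lE mulnK.
  by move=> rot_x; rewrite [LHS](rot_id_flatten_nseq p_gt0 p_dvd rot_x) size_tuple l_div_p.
have fixedE : [set c in bcount_circuits | iter p R c == c] = setX [set: 'Z_n]
    [set x : l.-tuple bool | (rot p x == x) &&
       ((m * count id (take p x) == k) && (n %| transit a b (take p x)))].
  apply/setP => -[v x]; rewrite !inE /=.
  have count_x : rot p x = x -> count id x = m * count id (take p x).
    by move=> rot_x; rewrite [in LHS]rep_w // count_flatten_nseq.
  have transit_x : rot p x = x -> transit a b x = m * transit a b (take p x).
    by move=> rot_x; rewrite [in LHS]rep_w // transit_flatten_nseq.
  apply/andP/andP => [[/andP[_ /eqP xk] /eqP]|[/eqP rot_x /andP[/eqP xk n_dvd]]].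
    case/(iter_rotc_tuple_id a b n_gt1 l_gt0) => // rot_x n_dvd.
    by rewrite rot_x -count_x // xk n_dvd !eqxx.
  have fixed : iter p R (v, x) = (v, x) by apply/(iter_rotc_tuple_id a b n_gt1 l_gt0).
  rewrite fixed count_x // xk !eqxx andbT; split=> //; apply/pbP/(is_circuitE a b n_gt1).
  by rewrite /= transit_x // dvdn_mull.
rewrite fixedE cardsX cardsT card_ord Zp_cast //.
rewrite (@card_rot_id_tuples _ _ m p
          (fun u => (m * count id u == k) && (n %| transit a b u))) //.
by rewrite card_tuples_count_transit //; case: ifP; rewrite ?muln0.
Qed.

Local Open Scope ring_scope.

Lemma card_prim_circuits_moebius :
  #|prim_circuits|%:R = \sum_(m <- divisors l)
     moebius m * #|[set c in bcount_circuits | iter (l %/ m)%N R c == c]|%:R :> int.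
Proof.
have R_inj := @rotc_tuple_inj n a b l.
rewrite prim_circuitsE card_set_sum.
under eq_bigr => c.
  rewrite inE => /andP[/pbP/(order_dvd_l n_gt1 l_gt0) o_l _].
  rewrite -(sum_moebius_dvd_div l_gt0 o_l (order_gt0 R c)) big_mkcond /=.
  over.
rewrite exchange_big /=; apply: eq_bigr => m _.
rewrite card_set_sum mulr_sumr; apply: eq_bigr => c _.
by rewrite order_dvdn_iter //; case: ifP; rewrite ?mulr1 ?mulr0.
Qed.

Lemma card_prim_orbits_moebius :
  (#|prim_orbits n a b l k| * l)%N%:R
  = \sum_(m <- divisors (gcdn l (gcdn k w))) moebius m * (n * 'C(l %/ m, k %/ m))%N%:R :> int.
Proof.
rewrite card_prim_orbits card_prim_circuits_moebius.
rewrite (eq_big_seq (fun m => if (m %| k)%N && (m %| w)%N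
                              then moebius m * (n * 'C(l %/ m, k %/ m))%N%:R else 0)).
  rewrite -big_mkcond; apply: big_divisors_filter; rewrite ?gcdn_gt0 ?l_gt0 //.
  by move=> m; rewrite andbT !dvdn_gcd.
move=> m; rewrite -dvdn_divisors // => m_l.
by rewrite card_fixed_circuits //; case: ifP; rewrite ?mulr0.
Qed.

End Counting.

Local Open Scope ring_scope.

Lemma transit_eq_winding n a b l k (omega : int) : (0 < n)%N -> (a <= b)%N -> (k <= l)%N ->
  l%:Z * a%:Z + k%:Z * (b%:Z - a%:Z) = omega * n%:Z ->
  (k * b + (l - k) * a = `|omega| * n)%N.
Proof.
move=> n_gt0 a_le_b k_le_l omega_eq.
have omega_ge0 : 0 <= omega.
  rewrite -(pmulr_lge0 _ (_ : 0 < n%:Z)) ?ltz_nat // -omega_eq.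
  by apply: addr_ge0; rewrite -?PoszM // mulr_ge0 // subr_ge0 lez_nat.
apply/eqP; rewrite -eqz_nat !PoszD !PoszM -subzn // gez0_abs // -omega_eq.
by apply/eqP; ring.
Qed.

Unset Implicit Arguments.

Theorem theorem1 (n a b l k : nat) (omega : int) :
  (1 < n)%N -> (0 < a)%N -> (a < b)%N -> (b < n)%N ->
  gcdn n (gcdn a b) = 1%N ->
  (1 <= l)%N -> (k <= l)%N ->
  (l%:Z * a%:Z + k%:Z * (b%:Z - a%:Z) = omega * n%:Z) ->
  (#|prim_orbits n a b l k|)%:R =
    (n%:R / l%:R : rat) *
    \sum_(m <- divisors (gcdn l (gcdn k `|omega|%N))) (moebius m)%:~R * ('C(l %/ m, k %/ m))%:R.
Proof.
move=> n_gt1 _ a_lt_b _ _ l_gt0 k_le_l omega_eq.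
have transit_eq := transit_eq_winding (ltnW n_gt1) (ltnW a_lt_b) k_le_l omega_eq.
have l_neq0 : l%:R != 0 :> rat by rewrite pnatr_eq0 -lt0n.
have := congr1 (intr : int -> rat) (card_prim_orbits_moebius n_gt1 l_gt0 k_le_l transit_eq).
rewrite rmorph_nat natrM rmorph_sum => /(canRL (mulfK l_neq0)) ->.
rewrite mulrAC mulr_sumr; congr (_ / _); apply: eq_bigr => m _.
by rewrite rmorphM /= rmorph_nat natrM mulrCA.
Qed.
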